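(* Let \textsc{Min-CSP} be a constraint satisfaction problem whose objective is to minimize the number of violated constraints, and let \textsc{Max-Comp-CSP} be the complementary problem of maximizing the number of satisfied constraints on the same instances. If there exists a PTAS for \textsc{Max-Comp-CSP} and a super robust algorithm for \textsc{Min-CSP}, then there exists a PTAS for \textsc{Min-CSP}.
   Context: For an instance with $C$ constraints, it is $(1-\varepsilon)$-satisfiable if some assignment satisfies at least $(1-\varepsilon)C$ constraints. A super robust algorithm for \textsc{Min-CSP} is a polynomial-time algorithm whose running time does not depend on $\varepsilon$ and which, on every $(1-\varepsilon)$-satisfiable instance with $C$ constraints, outputs an assignment violating at most $(\varepsilon+O(\varepsilon^2))C$ constraints (the constant in $O(\varepsilon^2)$ being independent of the instance). A PTAS for a minimization (resp. maximization) problem is a family of polynomial-time algorithms that, for every fixed $\tau>0$, output a solution of value at most $(1+\tau)$ (resp. at least $(1-\tau)$) times the optimum. *)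

From HB Require Import structures.
From mathcomp Require Import all_boot all_order all_algebra.
From mathcomp Require Import reals.
Set Implicit Arguments. Unset Strict Implicit. Unset Printing Implicit Defensive.
Import Order.TTheory GRing.Theory Num.Theory.
Local Open Scope ring_scope.

(* Min-CSP (minimize violated
   constraints) and Max-Comp-CSP (maximize satisfied constraints) live on the
   same instances. *)
Record CSP := {
  inst  : Type;
  asg   : inst -> finType;
  ncons : inst -> nat;
  sat   : forall i : inst, asg i -> 'I_(ncons i) -> bool }.

Section CSPDefs.
Variable P : CSP.

Definition nsat (i : inst P) (a : asg i) : nat :=
  #|[set j : 'I_(ncons i) | sat a j]|.
Definition nviol (i : inst P) (a : asg i) : nat :=
  #|[set j : 'I_(ncons i) | ~~ sat a j]|.

Definition algorithm := forall i : inst P, asg i.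

(* Abstract class [poly] of polynomial-time algorithms.  The only property
   used of it: running two polynomial-time algorithms, counting the violated
   constraints of both outputs, and returning the better one is again
   polynomial-time. *)
Definition select_closed (poly : algorithm -> Prop) : Prop :=
  forall A B : algorithm, poly A -> poly B ->
    poly (fun i => if (nviol (A i) <= nviol (B i))%N then A i else B i).

Variable R : realType.

Definition min_PTAS (poly : algorithm -> Prop) : Prop :=
  forall tau : R, 0 < tau -> exists A : algorithm, poly A /\
    forall (i : inst P) (a : asg i),
      (nviol (A i))%:R <= (1 + tau) * (nviol a)%:R.

Definition max_comp_PTAS (poly : algorithm -> Prop) : Prop :=
  forall tau : R, 0 < tau -> exists A : algorithm, poly A /\
    forall (i : inst P) (a : asg i),
      (1 - tau) * (nsat a)%:R <= (nsat (A i))%:R.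

Definition super_robust (poly : algorithm -> Prop) : Prop :=
  exists (K : R) (A : algorithm), poly A /\
    forall (i : inst P) (eps : R), 0 <= eps ->
      (exists a : asg i, (1 - eps) * (ncons i)%:R <= (nsat a)%:R) ->
      (nviol (A i))%:R <= (eps + K * eps ^+ 2) * (ncons i)%:R.

End CSPDefs.

From Pilot Require Import Defs.
From HB Require Import structures.
From mathcomp Require Import all_boot all_order all_algebra.
From mathcomp Require Import reals.
From mathcomp Require Import ring lra.
Set Implicit Arguments. Unset Strict Implicit. Unset Printing Implicit Defensive.
Import Order.TTheory GRing.Theory Num.Theory.

(* [seq.ncons] shadows the field of [CSP]. *)
Local Notation ncons := Defs.ncons.

(* Fix tau, put d := tau / (|K| + 1), run the Max-Comp PTAS with accuracy
   tau * d and the super robust algorithm, and keep the better output.  If the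
   optimum violates at least a d-fraction of the C constraints, the
   Max-Comp guarantee loses at most tau * d * C <= tau * OPT violated
   constraints.  Otherwise the instance is (1 - eps)-satisfiable with
   eps = OPT / C < d, and the robust algorithm violates at most
   (eps + K eps^2) C = OPT (1 + K eps) <= (1 + tau) OPT constraints. *)

Section Counting.
Variables (P : CSP) (i : inst P).

Lemma nsat_add_nviol (a : asg i) : (nsat a + nviol a)%N = ncons i.
Proof.
rewrite /nsat /nviol.
have -> : [set j | ~~ sat a j] = ~: [set j | sat a j].
  by apply/setP => j; rewrite !inE.
by rewrite cardsC card_ord.
Qed.

Lemma nviol_le_ncons (a : asg i) : (nviol a <= ncons i)%N.
Proof. by rewrite -(nsat_add_nviol a) leq_addl. Qed.

End Counting.

Section Selection.
Variable P : CSP.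

Definition select_better (A B : algorithm P) : algorithm P :=
  fun i => if (nviol (A i) <= nviol (B i))%N then A i else B i.

Lemma nviol_select_betterl (A B : algorithm P) i :
  (nviol (select_better A B i) <= nviol (A i))%N.
Proof. by rewrite /select_better; case: (leqP (nviol (A i))) => // /ltnW. Qed.

Lemma nviol_select_betterr (A B : algorithm P) i :
  (nviol (select_better A B i) <= nviol (B i))%N.
Proof. by rewrite /select_better; case: ifP. Qed.

End Selection.

Section Approximation.
Variables (R : realType) (P : CSP) (i : inst P).
Local Open Scope ring_scope.
Local Notation C := ((ncons i)%:R : R).

Lemma nsat_natr (a : asg i) : (nsat a)%:R = C - (nviol a)%:R :> R.
Proof. by rewrite -(nsat_add_nviol a) natrD addrK. Qed.

(* Also true for C = 0, where the ratio is 0 / 0 = 0 and so is nviol a. *)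
Lemma nviol_ratioK (a : asg i) : (nviol a)%:R / C * C = (nviol a)%:R.
Proof.
have [C0 | C_neq0] := eqVneq C 0; last by rewrite divfK.
apply/eqP; rewrite C0 mulr0 eq_sym eq_le ler0n andbT -C0 ler_nat.
exact: nviol_le_ncons.
Qed.

Lemma max_comp_approx_large_opt (tau d : R) (a b : asg i) : 0 < tau -> 0 <= d ->
  d * C <= (nviol a)%:R -> (1 - tau * d) * (nsat a)%:R <= (nsat b)%:R ->
  (nviol b)%:R <= (1 + tau) * (nviol a)%:R.
Proof.
move=> tau_gt0 d_ge0 large; rewrite !nsat_natr => approx.
have v_le_C : (nviol a)%:R <= C by rewrite ler_nat nviol_le_ncons.
have loss_le : tau * d * (C - (nviol a)%:R) <= tau * (nviol a)%:R.
  apply: le_trans (_ : tau * (d * C) <= _); last by rewrite ler_pM2l.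
  rewrite mulrA; apply: ler_wpM2l; first exact: mulr_ge0 (ltW tau_gt0) d_ge0.
  by rewrite gerBl ler0n.
nra.
Qed.

Lemma robust_approx_small_opt (K tau d : R) (a b : asg i) :
  0 <= d -> `|K| * d <= tau -> (nviol a)%:R <= d * C ->
  (forall eps : R, 0 <= eps ->
     (exists a' : asg i, (1 - eps) * C <= (nsat a')%:R) ->
     (nviol b)%:R <= (eps + K * eps ^+ 2) * C) ->
  (nviol b)%:R <= (1 + tau) * (nviol a)%:R.
Proof.
move=> d_ge0 Kd_le small robust.
set eps := (nviol a)%:R / C.
have epsK : eps * C = (nviol a)%:R := nviol_ratioK a.
have eps_ge0 : 0 <= eps by rewrite divr_ge0.
have eps_le_d : eps <= d.
  have [C0 | C_gt0] := eqVneq C 0; first by rewrite /eps C0 invr0 mulr0.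
  by rewrite ler_pdivrMr // lt_def C_gt0 ler0n.
have Keps_le : K * eps <= tau.
  apply: le_trans (ler_wpM2r eps_ge0 (ler_norm K)) _.
  exact: le_trans (ler_wpM2l (normr_ge0 K) eps_le_d) Kd_le.
have satisfiable : exists a' : asg i, (1 - eps) * C <= (nsat a')%:R.
  by exists a; rewrite nsat_natr mulrBl mul1r epsK.
apply: le_trans (robust eps eps_ge0 satisfiable) _.
have -> : (eps + K * eps ^+ 2) * C = (eps * C) * (1 + K * eps) by ring.
by rewrite epsK mulrC ler_wpM2r ?ler0n ?lerD2l.
Qed.

End Approximation.

Local Open Scope ring_scope.

Theorem mainTheorem9 (R : realType) (P : CSP) (poly : algorithm P -> Prop) :
  select_closed poly ->
  max_comp_PTAS R poly ->
  super_robust R poly ->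
  min_PTAS R poly.
Proof.
move=> sel max_ptas [K [A [polyA robustA]]] tau tau_gt0.
pose d := tau / (`|K| + 1).
have normK1_gt0 : 0 < `|K| + 1 by rewrite ltr_wpDl.
have d_gt0 : 0 < d by rewrite divr_gt0.
have Kd_le : `|K| * d <= tau.
  by rewrite /d mulrA ler_pdivrMr // mulrDr mulr1 mulrC lerDl ltW.
have [B [polyB approxB]] := max_ptas (tau * d) (mulr_gt0 tau_gt0 d_gt0).
exists (select_better A B); split; first exact: sel polyA polyB.
move=> i a.
have [large | small] := lerP (d * (ncons i)%:R) (nviol a)%:R.
- apply: le_trans (max_comp_approx_large_opt tau_gt0 (ltW d_gt0) large
                    (approxB i a)).
  by rewrite ler_nat nviol_select_betterr.
- apply: le_trans (robust_approx_small_opt (ltW d_gt0) Kd_le (ltW small)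
                    (robustA i)).
  by rewrite ler_nat nviol_select_betterl.
Qed.
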